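(* Let $L\in\mathbb{R}^{n\times n}$ be the Laplacian matrix of an undirected weighted graph, with eigenvalues $\lambda_1(L)\le\cdots\le\lambda_n(L)$ and orthonormal eigenvectors $v_1(L),\dots,v_n(L)$, and let $V_k=[v_1(L)\ \cdots\ v_k(L)]$, $\Lambda_k=\mathrm{diag}\{\lambda_i(L)\}_{i=1}^k$. Suppose $L$ is $k$-block-ideal with respect to a $k$-way partition $\{\mathcal{I}_1,\dots,\mathcal{I}_k\}$ of $[n]$, with invertible matrix $S\in\mathbb{R}^{k\times k}$ satisfying $V_k=P_{\{\mathcal{I}_i\}_{i=1}^k}S$, where $$P_{\{\mathcal{I}_i\}_{i=1}^k}:=[\mathbf{1}_{\mathcal{I}_1}\ \mathbf{1}_{\mathcal{I}_2}\ \cdots\ \mathbf{1}_{\mathcal{I}_k}].$$ Let $g_1(s),\dots,g_n(s)$, $f(s)$ be scalar transfer functions, $G(s)=\mathrm{diag}\{g_i(s)\}_{i=1}^n$ and $T_k(s)=V_k(V_k^TG^{-1}(s)V_k+f(s)\Lambda_k)^{-1}V_k^T$. Then $$T_k(s)=P_{\{\mathcal{I}_i\}_{i=1}^k}\big(I_k+\hat{G}(s)L_kf(s)\big)^{-1}\hat{G}(s)P^T_{\{\mathcal{I}_i\}_{i=1}^k},$$ where $\hat{G}(s)=\mathrm{diag}\{\hat{g}_i(s)\}_{i=1}^k$, $\hat{g}_i(s)=\big(\sum_{j\in\mathcal{I}_i}g_j^{-1}(s)\big)^{-1}$, and $L_k=(S^{-1})^T\Lambda_kS^{-1}$.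
   Context: For $\mathcal{I}\subseteq[n]=\{1,\dots,n\}$, $\mathbf{1}_{\mathcal{I}}\in\mathbb{R}^n$ is the indicator vector with $[\mathbf{1}_\mathcal{I}]_i=1$ if $i\in\mathcal{I}$ and $0$ otherwise. A Laplacian $L$ is called $k$-block-ideal with respect to a $k$-way partition $\{\mathcal{I}_1,\dots,\mathcal{I}_k\}$ of $[n]$ if there exists an invertible $S\in\mathbb{R}^{k\times k}$ with $[v_1(L)\ \cdots\ v_k(L)]=[\mathbf{1}_{\mathcal{I}_1}\ \cdots\ \mathbf{1}_{\mathcal{I}_k}]S$. *)

From HB Require Import structures.
From mathcomp Require Import all_boot all_order all_algebra.
From mathcomp Require Import complex.
Set Implicit Arguments. Unset Strict Implicit. Unset Printing Implicit Defensive.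
Import Order.TTheory GRing.Theory Num.Theory.
Local Open Scope ring_scope.

(* Laplacian of an undirected weighted graph on n nodes:
   L = D - A with A symmetric, nonnegative weights, zero diagonal;
   equivalently L symmetric, off-diagonal entries <= 0, zero row sums. *)
Definition is_laplacian (R : realDomainType) (n : nat) (L : 'M[R]_n) : Prop :=
  [/\ L^T = L,
      (forall i j : 'I_n, i != j -> L i j <= 0) &
      (forall i : 'I_n, \sum_(j < n) L i j = 0)].

(* indicator matrix P = [1_{I_1} ... 1_{I_k}] of the partition given by the
   block-label function lab : node j belongs to block I_(lab j). *)
Definition part_mx (R : nzRingType) (n k : nat) (lab : 'I_n -> 'I_k) : 'M[R]_(n, k) :=
  \matrix_(j < n, i < k) (lab j == i)%:R.

Definition firstcols (R : Type) (n k : nat) (hk : (k <= n)%N) (V : 'M[R]_n) : 'M[R]_(n, k) :=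
  \matrix_(i < n, j < k) V i (widen_ord hk j).

Definition cmx (R : rcfType) (m p : nat) (A : 'M[R]_(m, p)) : 'M[R[i]]_(m, p) :=
  map_mx (fun x => x%:C%C) A.

(* After complexification, V_k = P S turns the k x k matrix inverted in T_k
   into the congruence S^T (P^T G^-1 P + f L_k) S.  Since P is the indicator
   matrix of a partition, P^T G^-1 P is the diagonal matrix of the block sums
   of the 1/g_j, i.e. Ghat^-1, so S cancels and
   T_k = P (Ghat^-1 + f L_k)^-1 P^T = P (I + Ghat L_k f)^-1 Ghat P^T. *)

From HB Require Import structures.
From mathcomp Require Import all_boot all_order all_algebra.
From mathcomp Require Import complex.
Import Order.TTheory GRing.Theory Num.Theory.
Local Open Scope ring_scope.

Section Inverses.
Variables (F : comUnitRingType) (k : nat).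
Implicit Types A B K N S : 'M[F]_k.

Lemma invmxM A B :
  A \in unitmx -> B \in unitmx -> invmx (A *m B) = invmx B *m invmx A.
Proof.
move=> Au Bu; have ABu : A *m B \in unitmx by rewrite unitmx_mul Au Bu.
have ABV : A *m B *m (invmx B *m invmx A) = 1%:M.
  by rewrite mulmxA mulmxK // mulmxV.
by rewrite -[LHS]mulmx1 -ABV mulmxA mulVmx // mul1mx.
Qed.

Lemma unitmx_congr S N :
  S \in unitmx -> (S^T *m N *m S \in unitmx) = (N \in unitmx).
Proof. by move=> Su; rewrite !unitmx_mul unitmx_tr Su andbT. Qed.

Lemma invmx_congr S N : S \in unitmx -> N \in unitmx ->
  invmx (S^T *m N *m S) = invmx S *m invmx N *m invmx S^T.
Proof.
move=> Su Nu; have STu : S^T \in unitmx by rewrite unitmx_tr.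
by rewrite invmxM ?unitmx_mul ?STu ?Nu // invmxM // mulmxA.
Qed.

Lemma invmx_feedback A K : A \in unitmx -> invmx A + K \in unitmx ->
  invmx (1%:M + A *m K) *m A = invmx (invmx A + K).
Proof.
move=> Au Nu; rewrite -[1%:M](mulmxV Au) -mulmxDr invmxM //.
by rewrite mulmxKV ?unitmx_inv.
Qed.

End Inverses.

Section Diagonal.
Variables (F : fieldType) (n : nat) (d : 'rV[F]_n).
Hypothesis d_neq0 : forall i, d 0 i != 0.

Lemma mul_diag_mx_inv : diag_mx d *m diag_mx (\row_i (d 0 i)^-1) = 1%:M.
Proof.
apply/matrixP => i j; rewrite mul_diag_mx !mxE.
by case: eqVneq => [->|_]; rewrite ?mulr1n ?divff ?mulr0n ?mulr0.
Qed.

Lemma unitmx_diag : diag_mx d \in unitmx.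
Proof. exact: (mulmx1_unit mul_diag_mx_inv).1. Qed.

Lemma invmx_diag : invmx (diag_mx d) = diag_mx (\row_i (d 0 i)^-1).
Proof. by rewrite -[LHS]mulmx1 -mul_diag_mx_inv mulKmx ?unitmx_diag. Qed.

End Diagonal.

Lemma part_mx_congr_diag (F : comNzRingType) (n k : nat) (lab : 'I_n -> 'I_k)
    (w : 'rV[F]_n) :
  (part_mx F lab)^T *m diag_mx w *m part_mx F lab
  = diag_mx (\row_i \sum_(j < n | lab j == i) w 0 j).
Proof.
rewrite /part_mx mul_mx_diag; apply/matrixP => i i'; rewrite !mxE.
case: eqVneq => [<-|ne]; rewrite ?mulr1n ?mulr0n.
  rewrite [RHS]big_mkcond; apply: eq_bigr => j _.
  by rewrite !mxE; case: eqP; rewrite ?mulr1 ?mul1r ?mul0r.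
apply: big1 => j _; rewrite !mxE.
case: eqVneq => [->|_]; last by rewrite !mul0r.
by rewrite (negbTE ne) mulr0.
Qed.

Section Complexification.
Variable R : rcfType.

Lemma cmxM (m p q : nat) (A : 'M[R]_(m, p)) (B : 'M[R]_(p, q)) :
  cmx (A *m B) = cmx A *m cmx B.
Proof. exact: (map_mxM (real_complex R)). Qed.

Lemma cmx_tr (m p : nat) (A : 'M[R]_(m, p)) : cmx A^T = (cmx A)^T.
Proof. by rewrite /cmx map_trmx. Qed.

Lemma cmx_inv (m : nat) (A : 'M[R]_m) : cmx (invmx A) = invmx (cmx A).
Proof. exact: (map_invmx (real_complex R)). Qed.

Lemma cmx_unitmx (m : nat) (A : 'M[R]_m) : (cmx A \in unitmx) = (A \in unitmx).
Proof. exact: (map_unitmx (real_complex R)). Qed.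

Lemma cmx_part_mx (n k : nat) (lab : 'I_n -> 'I_k) :
  cmx (part_mx R lab) = part_mx R[i] lab.
Proof. by apply/matrixP => j i; rewrite !mxE rmorph_nat. Qed.

End Complexification.

Lemma block_ideal_reduction (F : comUnitRingType) (n k : nat)
    (P : 'M[F]_(n, k)) (S Ghat Lam : 'M[F]_k) (Ginv : 'M[F]_n) (c : F) :
  S \in unitmx -> Ghat \in unitmx -> P^T *m Ginv *m P = invmx Ghat ->
  let W := P *m S in
  W^T *m Ginv *m W + c *: Lam \in unitmx ->
  W *m invmx (W^T *m Ginv *m W + c *: Lam) *m W^T
  = P *m invmx (1%:M + Ghat *m ((invmx S)^T *m Lam *m invmx S) *m c%:M)
      *m Ghat *m P^T.
Proof.
move=> Su Ghatu PGP W.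
set K := (invmx S)^T *m Lam *m invmx S; set N := invmx Ghat + c *: K.
have LamE : Lam = S^T *m K *m S.
  by rewrite /K !mulmxA -trmx_mul mulVmx // trmx1 mul1mx mulmxKV.
have -> : W^T *m Ginv *m W + c *: Lam = S^T *m N *m S.
  rewrite trmx_mul -!mulmxA (mulmxA P^T) (mulmxA (P^T *m Ginv)) PGP.
  by rewrite LamE mulmxDl mulmxDr scalemxAl scalemxAr !mulmxA.
rewrite unitmx_congr // => Nu; rewrite invmx_congr // -trmx_inv.
have feedbackE : invmx (1%:M + Ghat *m K *m c%:M) *m Ghat = invmx N.
  by rewrite mul_mx_scalar scalemxAr invmx_feedback.
rewrite -(mulmxA P) feedbackE /W trmx_mul !mulmxA mulmxK //.
by rewrite -(mulmxA _ (invmx S)^T) -trmx_mul mulmxV // trmx1 mulmx1.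
Qed.

Theorem theorem3 (R : rcfType) (n k : nat) (hk : (k <= n)%N)
    (L : 'M[R]_n) (lam : 'I_n -> R) (V : 'M[R]_n)
    (lab : 'I_n -> 'I_k) (S : 'M[R]_k)
    (g : 'I_n -> R[i] -> R[i]) (f : R[i] -> R[i]) :
  is_laplacian L ->
  (* eigenvalues sorted nondecreasingly *)
  (forall i j : 'I_n, (i <= j)%N -> lam i <= lam j) ->
  (* orthonormal eigenvectors: columns of V *)
  V^T *m V = 1%:M ->
  L *m V = V *m diag_mx (\row_i lam i) ->
  (* the partition {I_1,...,I_k} has nonempty blocks *)
  (forall i : 'I_k, exists j : 'I_n, lab j = i) ->
  (* k-block-ideal: V_k = P S with S invertible *)
  S \in unitmx ->
  firstcols hk V = part_mx R lab *m S ->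
  forall s : R[i],
  let Vk := cmx (firstcols hk V) in
  let Lamk := cmx (diag_mx (\row_(j < k) lam (widen_ord hk j))) in
  let G := diag_mx (\row_j g j s) in
  let P := cmx (part_mx R lab) in
  let Ghat := diag_mx (\row_(i < k) (\sum_(j < n | lab j == i) (g j s)^-1)^-1) in
  let Lk := cmx ((invmx S)^T *m diag_mx (\row_(j < k) lam (widen_ord hk j)) *m invmx S) in
  (* well-definedness of the expressions at s *)
  (forall j : 'I_n, g j s != 0) ->
  (forall i : 'I_k, \sum_(j < n | lab j == i) (g j s)^-1 != 0) ->
  (Vk^T *m invmx G *m Vk + f s *: Lamk) \in unitmx ->
  Vk *m invmx (Vk^T *m invmx G *m Vk + f s *: Lamk) *m Vk^T
  = P *m invmx (1%:M + Ghat *m Lk *m (f s)%:M) *m Ghat *m P^T.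
Proof.
move=> _ _ _ _ _ Su VkE s Vk Lamk G P Ghat Lk g_neq0 sum_neq0.
have Ghat_neq0 i :
    (\row_(i' < k) (\sum_(j < n | lab j == i') (g j s)^-1)^-1) 0 i != 0.
  by rewrite mxE invr_eq0.
have PGP : P^T *m invmx G *m P = invmx Ghat.
  rewrite invmx_diag => [|j]; last by rewrite mxE.
  rewrite invmx_diag // /P cmx_part_mx part_mx_congr_diag.
  congr diag_mx; apply/rowP => i; rewrite !mxE invrK.
  by apply: eq_bigr => j _; rewrite !mxE.
rewrite /Vk VkE cmxM /Lk !cmxM cmx_tr !cmx_inv -/P.
by apply: block_ideal_reduction; rewrite ?cmx_unitmx ?unitmx_diag.
Qed.
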